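(* Let $\varphi$ be a rule defined on $\mathcal{E}_{\mathcal{SP}}$. Then $\varphi$ satisfies own-peak-onliness, efficiency, the equal division guarantee, and not obvious manipulability (NOM) if and only if $\varphi$ is a simple rule.
   Context: Let $N=\{1,\dots,n\}$ be a finite set of agents. A preference $R_i$ is a continuous complete preorder on $\mathbb{R}_+\cup\{\infty\}$, with strict part $P_i$ and indifference $I_i$. Its peak is $p(R_i)=\{x: xR_iy \text{ for all } y\in\mathbb{R}_+\cup\{\infty\}\}$; when it is a singleton we identify it with its element. $R_i$ is single-peaked if $p(R_i)$ is a singleton and for all $x,x'\in\mathbb{R}_+$, $xP_ix'$ whenever $x'<x\le p(R_i)$ or $p(R_i)\le x<x'$. $\mathcal{SP}$ is the set of single-peaked preferences. An economy is a pair $(R,\Omega)$ with $R=(R_j)_{j\in N}\in\mathcal{SP}^n$ and $\Omega>0$; $\mathcal{E}_{\mathcal{SP}}$ is the set of all economies. A rule is a map $\varphi:\mathcal{E}_{\mathcal{SP}}\to\mathbb{R}^n_+$ with $\sum_{j\in N}\varphi_j(R,\Omega)=\Omega$ for every economy. Properties: Efficiency: for no economy is there $x\in\mathbb{R}^n_+$ with $\sum_j x_j=\Omega$, $x_iR_i\varphi_i(R,\Omega)$ for all $i$ and $x_iP_i\varphi_i(R,\Omega)$ for some $i$. Own-peak-onliness: if $p(R_i')=p(R_i)$ then $\varphi_i(R,\Omega)=\varphi_i(R_i',R_{-i},\Omega)$. Equal division guarantee: for every economy $(R,\Omega)$ and $i$ with $p(R_i)=\Omega/n$, $\varphi_i(R,\Omega)\,I_i\,\Omega/n$.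 Option set: $O^\varphi(R_i,\Omega)=\{\varphi_i(R_i,R_{-i},\Omega): R_{-i}\in\mathcal{SP}^{n-1}\}$. $R_i'$ is a manipulation of $\varphi$ at $(R_i,\Omega)$ if $\varphi_i(R_i',R_{-i},\Omega)P_i\varphi_i(R_i,R_{-i},\Omega)$ for some $R_{-i}$; it is an obvious manipulation if moreover for every $x'\in O^\varphi(R_i',\Omega)$ there is $x\in O^\varphi(R_i,\Omega)$ with $x'P_ix$. $\varphi$ is NOM if no agent $i$ has an obvious manipulation at any $(R_i,\Omega)$. Simple rules: for an economy let $z(R,\Omega)=\sum_j p(R_j)-\Omega$. Agent $i$ is simple if either $z(R,\Omega)\ge0$ and $p(R_i)<\Omega/n$, or $z(R,\Omega)\le 0$ and $p(R_i)>\Omega/n$; $N^+(R,\Omega)$ is the set of simple agents and $N^-(R,\Omega)=N\setminus N^+(R,\Omega)$. Let $E(R,\Omega)=\left|\Omega-\left(\sum_{j\in N^+}p(R_j)+|N^-|\frac{\Omega}{n}\right)\right|$. An own-peak-only rule $\varphi$ is simple if for every economy and every $i$: $\varphi_i(R,\Omega)=p(R_i)$ if $i\in N^+(R,\Omega)$; $\varphi_i(R,\Omega)=\frac{\Omega}{n}+\nu_i$ if $i\in N^-(R,\Omega)$ and $z(R,\Omega)\ge0$; $\varphi_i(R,\Omega)=\frac{\Omega}{n}-\nu_i$ if $i\in N^-(R,\Omega)$ and $z(R,\Omega)\le0$; where the numbers $\nu_i=\nu_i(R,\Omega)$ satisfy $0\le\nu_i\le|p(R_i)-\frac{\Omega}{n}|$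 and $\sum_{j\in N^-(R,\Omega)}\nu_j=E(R,\Omega)$. *)

(* reals are an arbitrary 'R : realType';
   the consumption space R_+ \cup {oo} is modelled as [0, +oo] inside \bar R. *)
From HB Require Import structures.
From mathcomp Require Import all_boot all_order all_algebra.
From mathcomp Require Import all_classical all_reals.
From mathcomp Require Import topology ereal.
Set Implicit Arguments. Unset Strict Implicit. Unset Printing Implicit Defensive.
Import Order.TTheory GRing.Theory Num.Theory.
Local Open Scope ring_scope.
Local Open Scope classical_set_scope.

Section Defs.
Variable R : realType.

Definition cons_set : set (\bar R) := [set x | (0 <= x)%E].

(* a preference is a binary relation ("x R_i y": x is at least as good as y) *)
Definition pref := \bar R -> \bar R -> Prop.

Definition strict (Ri : pref) x y := Ri x y /\ ~ Ri y x.
Definition indiff (Ri : pref) x y := Ri x y /\ Ri y x.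

Definition complete_preorder (Ri : pref) :=
  (forall x, cons_set x -> Ri x x) /\
  (forall x y z, cons_set x -> cons_set y -> cons_set z ->
     Ri x y -> Ri y z -> Ri x z) /\
  (forall x y, cons_set x -> cons_set y -> Ri x y \/ Ri y x).

Definition continuous_pref (Ri : pref) :=
  forall x, cons_set x ->
    closed [set y | cons_set y /\ Ri y x] /\ closed [set y | cons_set y /\ Ri x y].

Definition preference (Ri : pref) := complete_preorder Ri /\ continuous_pref Ri.

Definition peak_set (Ri : pref) : set (\bar R) :=
  [set x | cons_set x /\ forall y, cons_set y -> Ri x y].

(* p(R_i) as an element (meaningful when the peak set is a singleton) *)
Definition peak (Ri : pref) : \bar R := xget 0%E (peak_set Ri).

Definition single_peaked (Ri : pref) :=
  preference Ri /\
  (exists p, peak_set Ri = [set p]) /\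
  (forall x x' : R, 0 <= x -> 0 <= x' ->
     ((x' < x /\ (x%:E <= peak Ri)%E) \/ ((peak Ri <= x%:E)%E /\ x < x')) ->
     strict Ri x%:E x'%:E).

Variable n : nat.

Definition profile := 'I_n -> pref.

Definition economy (Rp : profile) (Om : R) :=
  (forall j, single_peaked (Rp j)) /\ 0 < Om.

Definition upd (Rp : profile) (i : 'I_n) (Ri : pref) : profile :=
  fun j => if j == i then Ri else Rp j.

Definition ruleT := profile -> R -> 'I_n -> R.

Definition is_rule (phi : ruleT) :=
  forall Rp Om, economy Rp Om ->
    (forall j, 0 <= phi Rp Om j) /\ \sum_(j < n) phi Rp Om j = Om.

Definition efficient (phi : ruleT) :=
  forall Rp Om, economy Rp Om ->
    ~ exists x : 'I_n -> R,
        (forall j, 0 <= x j) /\ \sum_(j < n) x j = Om /\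
        (forall j, Rp j (x j)%:E (phi Rp Om j)%:E) /\
        (exists j, strict (Rp j) (x j)%:E (phi Rp Om j)%:E).

Definition own_peak_only (phi : ruleT) :=
  forall Rp Om i Ri', economy Rp Om -> single_peaked Ri' ->
    peak Ri' = peak (Rp i) -> phi Rp Om i = phi (upd Rp i Ri') Om i.

Definition equal_division_guarantee (phi : ruleT) :=
  forall Rp Om i, economy Rp Om -> peak (Rp i) = (Om / n%:R)%:E ->
    indiff (Rp i) (phi Rp Om i)%:E (Om / n%:R)%:E.

Definition option_set (phi : ruleT) (i : 'I_n) (Ri : pref) (Om : R) : set R :=
  [set y | exists Rp : profile,
     (forall j, j != i -> single_peaked (Rp j)) /\ y = phi (upd Rp i Ri) Om i].

Definition manipulation (phi : ruleT) (i : 'I_n) (Ri Ri' : pref) (Om : R) :=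
  exists Rp : profile, (forall j, j != i -> single_peaked (Rp j)) /\
    strict Ri (phi (upd Rp i Ri') Om i)%:E (phi (upd Rp i Ri) Om i)%:E.

Definition obvious_manipulation (phi : ruleT) (i : 'I_n) (Ri Ri' : pref) (Om : R) :=
  manipulation phi i Ri Ri' Om /\
  forall x', option_set phi i Ri' Om x' ->
    exists2 x, option_set phi i Ri Om x & strict Ri x'%:E x%:E.

Definition NOM (phi : ruleT) :=
  forall i Ri Ri' Om, single_peaked Ri -> single_peaked Ri' -> 0 < Om ->
    ~ obvious_manipulation phi i Ri Ri' Om.

Definition excess (Rp : profile) (Om : R) : \bar R :=
  (\sum_(j < n) peak (Rp j) - Om%:E)%E.

Definition simple_agent (Rp : profile) (Om : R) (i : 'I_n) : bool :=
  `[< ((0 <= excess Rp Om)%E /\ (peak (Rp i) < (Om / n%:R)%:E)%E) \/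
      ((excess Rp Om <= 0)%E /\ ((Om / n%:R)%:E < peak (Rp i))%E) >].

Definition Eterm (Rp : profile) (Om : R) : \bar R :=
  `| Om%:E - (\sum_(j < n | simple_agent Rp Om j) peak (Rp j)
              + (#|[set j | ~~ simple_agent Rp Om j]|%:R * (Om / n%:R))%:E) |%E.

Definition simple_rule (phi : ruleT) :=
  own_peak_only phi /\
  forall Rp Om, economy Rp Om ->
    exists nu : 'I_n -> R,
      (forall i, ~~ simple_agent Rp Om i ->
         0 <= nu i /\ ((nu i)%:E <= `| peak (Rp i) - (Om / n%:R)%:E |)%E) /\
      (\sum_(j < n | ~~ simple_agent Rp Om j) (nu j)%:E = Eterm Rp Om)%E /\
      (forall i, simple_agent Rp Om i -> (phi Rp Om i)%:E = peak (Rp i)) /\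
      (forall i, ~~ simple_agent Rp Om i ->
         ((0 <= excess Rp Om)%E -> phi Rp Om i = Om / n%:R + nu i) /\
         ((excess Rp Om <= 0)%E -> phi Rp Om i = Om / n%:R - nu i)).

End Defs.

(* A simple rule gives every agent an amount between her peak and the equal share, on the
   side of her peak fixed by the sign of the excess demand.  Hence all agents are rationed
   on the same side of their peaks, which is efficiency; and reporting the equal share as
   one's peak, which secures exactly the equal share, is never an obvious manipulation.
   Conversely, efficiency forbids one agent above and another below her peak (a small
   transfer between them is a Pareto improvement), so with excess demand nobody exceeds her
   peak, and symmetrically.  Own-peak-onliness, the equal division guarantee and NOM forbid
   any allotment that some preference with the same peak ranks strictly below the equal
   share, since reporting the equal share would then be an obvious manipulation; kinked
   preferences with steep enough slopes show that this excludes every allotment outside the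
   interval between the peak and the equal share.  So simple agents receive their peaks and
   nu_i = |phi_i - Om/n| has the required properties. *)

From mathcomp Require Import all_boot all_order all_algebra.
From mathcomp Require Import all_classical all_reals.
From mathcomp Require Import topology ereal normedtype.
From mathcomp Require Import lra.
Set Implicit Arguments. Unset Strict Implicit. Unset Printing Implicit Defensive.
Import Order.TTheory GRing.Theory Num.Theory.
Local Open Scope ring_scope.
Local Open Scope classical_set_scope.

Section KinkedPreference.
Variables (R : realType) (p a b : R).

Definition kink_loss (y : \bar R) : \bar R :=
  if y is r%:E then (if r <= p then a * (p - r) else b * (r - p))%:E else +oo%E.

Definition kinked_pref : pref R := fun x y => (kink_loss x <= kink_loss y)%E.

Lemma kink_loss_ge0 y : 0 < a -> 0 < b -> (0 <= kink_loss y)%E.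
Proof.
move=> a_gt0 b_gt0; case: y => [r| |] //=; rewrite lee_fin.
by case: (leP r p) => rp; apply: mulr_ge0; lra.
Qed.

Lemma kink_loss_peak : kink_loss p%:E = 0%E.
Proof. by rewrite /= lexx subrr mulr0. Qed.

Lemma kink_loss_eq0 y : 0 < a -> 0 < b -> kink_loss y = 0%E -> y = p%:E.
Proof.
move=> a_gt0 b_gt0; case: y => [r| |] //= /eqP; rewrite eqe.
by case: (leP r p) => rp; rewrite mulf_eq0 subr_eq0 gt_eqF //= => /eqP ->.
Qed.

Lemma kink_loss_le (t : R) y : 0 < a -> 0 < b -> 0 <= t ->
  (kink_loss y <= t%:E)%E = ((p - t / a)%:E <= y <= (p + t / b)%:E)%E.
Proof.
move=> a_gt0 b_gt0 t0; have ta : 0 <= t / a by apply: divr_ge0; lra.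
have tb : 0 <= t / b by apply: divr_ge0; lra.
case: y => [r| |] //=; rewrite ?leey ?leNye ?andbF ?andbT // !lee_fin.
case: (leP r p) => rp.
- rewrite -ler_pdivlMl // mulrC; apply/idP/andP => [h|[h _]]; [split|]; lra.
- rewrite -ler_pdivlMl // mulrC; apply/idP/andP => [h|[_ h]]; [split|]; lra.
Qed.

Lemma kink_loss_lt (t : R) y : 0 < a -> 0 < b -> 0 <= t ->
  (kink_loss y < t%:E)%E = ((p - t / a)%:E < y < (p + t / b)%:E)%E.
Proof.
move=> a_gt0 b_gt0; rewrite le_eqVlt => /predU1P[<-|t_gt0].
  rewrite !mul0r subr0 addr0 ltNge kink_loss_ge0 //.
  by apply/esym/negP => /andP[/lt_trans h/h]; rewrite ltxx.
have ta : 0 < t / a by apply: divr_gt0.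
have tb : 0 < t / b by apply: divr_gt0.
case: y => [r| |] //=; rewrite ?ltey ?ltNye ?andbF ?andbT // !lte_fin.
case: (leP r p) => rp.
- rewrite -ltr_pdivlMl // mulrC; apply/idP/andP => [h|[h _]]; [split|]; lra.
- rewrite -ltr_pdivlMl // mulrC; apply/idP/andP => [h|[_ h]]; [split|]; lra.
Qed.

Lemma kinked_strict x y :
  (kink_loss x < kink_loss y)%E -> strict kinked_pref x y.
Proof. by move=> xy; split; rewrite /kinked_pref; [apply: ltW|rewrite leNgt xy]. Qed.

Lemma kinked_continuous : 0 < a -> 0 < b -> continuous_pref kinked_pref.
Proof.
move=> a_gt0 b_gt0 [r| |] x0; rewrite /kinked_pref; last by [].
- have [t -> t0] : exists2 t, kink_loss r%:E = t%:E & 0 <= t.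
    by exists (if r <= p then a * (p - r) else b * (r - p)) => //; exact: (kink_loss_ge0 r%:E).
  split.
  + rewrite (_ : [set y | _] = @cons_set R `&` [set y | (p - t / a)%:E <= y]%E
                                         `&` [set y | y <= (p + t / b)%:E]%E).
      by apply: closedI; [apply: closedI|];
        [apply: closed_ereal_le_ereal|apply: closed_ereal_le_ereal|apply: closed_ereal_ge_ereal].
    rewrite predeqE => y /=; rewrite kink_loss_le //.
    by split => [[? /andP[? ?]]|[[? ?] ?]]; do ?split => //; apply/andP.
  + rewrite (_ : [set y | _] = @cons_set R `&` ~` ([set y | (p - t / a)%:E < y]%E
                                         `&` [set y | y < (p + t / b)%:E]%E)).
      apply: closedI; first exact: closed_ereal_le_ereal.
      by apply: open_closedC; apply: openI; [apply: open_ereal_gt_ereal|apply: open_ereal_lt_ereal].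
    rewrite predeqE => y /=; rewrite leNgt kink_loss_lt //.
    by split=> [[? /negP h]|[? h]]; split=> //;
      [case=> ? ?; apply: h; apply/andP|apply/negP => /andP].
- split.
  + rewrite (_ : [set y | _] = @cons_set R); first exact: closed_ereal_le_ereal.
    by rewrite predeqE => y /=; split => [[]|] //; split => //; rewrite leey.
  + rewrite (_ : [set y | _] = [set y | +oo <= y]%E); first exact: closed_ereal_le_ereal.
    rewrite predeqE => -[s| |] /=.
    * by rewrite !leNgt !ltey; split => [[]|].
    * by split => [[]|_] //; split; rewrite /cons_set ?leey.
    * by split => [[]|].
Qed.

Lemma kinked_peak_set : 0 <= p -> 0 < a -> 0 < b -> peak_set kinked_pref = [set p%:E].
Proof.
move=> p_ge0 a_gt0 b_gt0; have p_cons : cons_set p%:E by [].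
rewrite predeqE => x; split => [[_ /(_ _ p_cons)]|->].
  rewrite /kinked_pref kink_loss_peak => x_le0.
  by apply: kink_loss_eq0 => //; apply/eqP; rewrite eq_le x_le0 kink_loss_ge0.
by split=> // y _; rewrite /kinked_pref kink_loss_peak kink_loss_ge0.
Qed.

Lemma kinked_peak : 0 <= p -> 0 < a -> 0 < b -> peak kinked_pref = p%:E.
Proof.
by move=> p_ge0 a_gt0 b_gt0; rewrite /peak kinked_peak_set //; apply: xget_unique.
Qed.

Lemma kinked_single_peaked : 0 <= p -> 0 < a -> 0 < b -> single_peaked kinked_pref.
Proof.
move=> p_ge0 a_gt0 b_gt0; split; [split|split].
- split; first by move=> x _; rewrite /kinked_pref.
  split; first by move=> x y z _ _ _; apply: le_trans.
  by move=> x y _ _; rewrite /kinked_pref; case: (leP (kink_loss x) (kink_loss y)) => h;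
    [left|right; apply: ltW].
- exact: kinked_continuous.
- by exists p%:E; apply: kinked_peak_set.
- move=> x x' _ _; rewrite kinked_peak // !lee_fin => h; apply: kinked_strict.
  rewrite /= lte_fin; case: (leP x p) => xp; case: (leP x' p) => x'p.
  all: by case: h => -[]; nra.
Qed.

End KinkedPreference.

Section SinglePeaked.
Variable R : realType.
Implicit Types (Ri : pref R) (x y : R).

Lemma single_peaked_refl Ri x : single_peaked Ri -> 0 <= x -> Ri x%:E x%:E.
Proof. by case=> [[[refl _] _] _] x_ge0; apply: refl. Qed.

Lemma single_peaked_lt_peak Ri x y : single_peaked Ri -> 0 <= y ->
  y < x -> (x%:E <= peak Ri)%E -> strict Ri x%:E y%:E.
Proof. by case=> _ [_ sp] y_ge0 yx xp; apply: sp; [lra|lra|left]. Qed.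

Lemma single_peaked_gt_peak Ri x y : single_peaked Ri -> 0 <= x ->
  (peak Ri <= x%:E)%E -> x < y -> strict Ri x%:E y%:E.
Proof. by case=> _ [_ sp] x_ge0 px xy; apply: sp; [lra|lra|right]. Qed.

Lemma peak_ge0 Ri : single_peaked Ri -> (0 <= peak Ri)%E.
Proof.
case=> _ [[p pset] _]; have : peak_set Ri p by rewrite pset.
have -> : peak Ri = p by rewrite /peak pset; apply: xget_unique.
by case.
Qed.

Lemma single_peaked_between Ri x y : single_peaked Ri -> 0 <= x -> 0 <= y ->
  (peak Ri <= x%:E)%E /\ x <= y \/ y <= x /\ (x%:E <= peak Ri)%E -> Ri x%:E y%:E.
Proof.
move=> sp x_ge0 y_ge0 xy_between.
have [<-|xy] := eqVneq x y; first exact: single_peaked_refl.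
suff : strict Ri x%:E y%:E by case.
case: xy_between => -[h1 h2];
  [apply: (single_peaked_gt_peak sp)|apply: (single_peaked_lt_peak sp)] => //.
- by rewrite lt_neqAle xy.
- by rewrite lt_neqAle eq_sym xy.
Qed.

Lemma same_peak_prefers_up Ri x y : single_peaked Ri -> 0 <= x ->
  (x%:E < peak Ri)%E -> x < y ->
  exists Rs, [/\ single_peaked Rs, peak Rs = peak Ri & strict Rs y%:E x%:E].
Proof.
move=> sp x_ge0 xp xy; have [yp|py] := leP y%:E (peak Ri).
  by exists Ri; split=> //; apply: single_peaked_lt_peak => //; lra.
have p_ge0 := peak_ge0 sp; move: xp py p_ge0; case: (peak Ri) => [r| |] //.
rewrite !lte_fin lee_fin => xr ry r_ge0.
(* [K] is steep enough that [K * (r - x) > y - r]. *)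
pose K := (y - r) / (r - x) + 1.
have K_gt0 : 0 < K by rewrite ltr_wpDl // divr_ge0 //; lra.
exists (kinked_pref r K 1); split; [exact: kinked_single_peaked|exact: kinked_peak|].
apply: kinked_strict; rewrite /= lte_fin (ltW xr) leNgt ry /= mul1r.
by rewrite mulrDl divfK ?mul1r; lra.
Qed.

Lemma same_peak_prefers_down Ri x y : single_peaked Ri -> 0 <= y ->
  (peak Ri < x%:E)%E -> y < x ->
  exists Rs, [/\ single_peaked Rs, peak Rs = peak Ri & strict Rs y%:E x%:E].
Proof.
move=> sp y_ge0 px yx; have [py|yp] := leP (peak Ri) y%:E.
  by exists Ri; split=> //; apply: single_peaked_gt_peak.
have p_ge0 := peak_ge0 sp; move: px yp p_ge0; case: (peak Ri) => [r| |] //.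
rewrite !lte_fin lee_fin => rx yr r_ge0.
pose K := (r - y) / (x - r) + 1.
have K_gt0 : 0 < K by rewrite ltr_wpDl // divr_ge0 //; lra.
exists (kinked_pref r 1 K); split; [exact: kinked_single_peaked|exact: kinked_peak|].
apply: kinked_strict; rewrite /= lte_fin (ltW yr) leNgt rx /= mul1r.
by rewrite mulrDl divfK ?mul1r; lra.
Qed.

End SinglePeaked.

Section Arithmetic.
Variable R : realType.

Lemma bounded_fineK (e : \bar R) (x : R) : (0 <= e)%E -> (e <= x%:E)%E -> e = (fine e)%:E.
Proof. by case: e. Qed.

Lemma lee_addr_dist (c d : R) (e : \bar R) :
  (c%:E <= e)%E -> (d%:E <= `|e - c%:E|)%E -> ((c + d)%:E <= e)%E.
Proof.
case: e => [r| |] //=; rewrite ?leey // !lee_fin => cr.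
by rewrite ger0_norm ?subr_ge0 //; lra.
Qed.

Lemma lee_subr_dist (c d : R) (e : \bar R) :
  (e <= c%:E)%E -> (d%:E <= `|e - c%:E|)%E -> (e <= (c - d)%:E)%E.
Proof.
case: e => [r| |] //=; rewrite ?leNye // !lee_fin => rc.
by rewrite ler0_norm ?subr_le0 //; lra.
Qed.

Lemma lt_EFin_gap (x : R) (e : \bar R) :
  (x%:E < e)%E -> exists2 d, 0 < d & ((x + d)%:E <= e)%E.
Proof.
case: e => [r| |] // => [|_]; last by exists 1; rewrite ?leey.
by rewrite lte_fin => xr; exists (r - x); rewrite ?subr_gt0 // addrC subrK.
Qed.

Lemma dist_le_between (f r c : R) :
  ~ (f < r /\ f < c) -> ~ (r < f /\ c < f) -> `|f - c| <= `|r - c|.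
Proof.
move=> not_below not_above.
case: (ltgtP f c) => [fc|cf|->]; last by rewrite subrr normr0.
- have rf : r <= f by rewrite leNgt; apply/negP => rf; apply: not_below.
  by rewrite !ltr0_norm ?subr_lt0 //; lra.
- have fr : f <= r by rewrite leNgt; apply/negP => rf; apply: not_above.
  by rewrite !gtr0_norm ?subr_gt0 //; lra.
Qed.

Variable I : finType.
Implicit Types (P : pred I) (F G : I -> R).

Lemma ltr_sum_le_lt F G i :
  (forall j, F j <= G j) -> F i < G i -> \sum_j F j < \sum_j G j.
Proof.
move=> FG FGi; rewrite (bigD1 i) //= [X in _ < X](bigD1 i) //=.
by apply: ltr_leD => //; apply: ler_sum => j _.
Qed.

Lemma ler_sum_eq F G :
  (forall j, F j <= G j) -> \sum_j F j = \sum_j G j -> F =1 G.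
Proof.
move=> FG sumFG i; have sumGF0 : \sum_j (G j - F j) = 0 by rewrite sumrB sumFG subrr.
apply/eqP; rewrite eq_sym -subr_eq0; apply/eqP.
by apply: (psumr_eq0P _ sumGF0) => // j _; rewrite subr_ge0.
Qed.

Lemma sum_norm_same_sign P F :
  (forall j, P j -> 0 <= F j) \/ (forall j, P j -> F j <= 0) ->
  \sum_(j | P j) `|F j| = `|\sum_(j | P j) F j|.
Proof.
case=> sgnF.
  by rewrite ger0_norm ?sumr_ge0 //; apply: eq_bigr => j /sgnF /ger0_norm.
rewrite ler0_norm -?sumrN; first by apply: eq_bigr => j /sgnF /ler0_norm.
by rewrite -oppr_ge0 -sumrN sumr_ge0 // => j /sgnF; rewrite oppr_ge0.
Qed.

End Arithmetic.

Section Rules.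
Variables (R : realType) (n : nat) (phi : ruleT R n).
Implicit Types (Rp : profile R n) (Om : R) (i j : 'I_n).

Lemma economy_upd Rp i Ri Om :
  (forall j, j != i -> single_peaked (Rp j)) -> single_peaked Ri -> 0 < Om ->
  economy (upd Rp i Ri) Om.
Proof. by move=> Rp_sp Ri_sp Om_gt0; split=> // j; rewrite /upd; case: eqVneq => // /Rp_sp. Qed.

Lemma upd_at Rp i Ri : upd Rp i Ri i = Ri.
Proof. by rewrite /upd eqxx. Qed.

Lemma share_ge0 Om : 0 < Om -> 0 <= Om / n%:R.
Proof. by move=> Om_gt0; rewrite divr_ge0 // ltW. Qed.

Lemma Eterm_total_deviation Rp Om (x : 'I_n -> R) :
  \sum_j x j = Om ->
  (forall j, simple_agent Rp Om j -> (x j)%:E = peak (Rp j)) ->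
  (forall j, ~~ simple_agent Rp Om j -> Om / n%:R <= x j) \/
  (forall j, ~~ simple_agent Rp Om j -> x j <= Om / n%:R) ->
  Eterm Rp Om = (\sum_(j | ~~ simple_agent Rp Om j) `|x j - Om / n%:R|)%:E.
Proof.
move=> sum_x x_simple x_side; set S := simple_agent Rp Om; set c := Om / n%:R.
have sum_peaks : (\sum_(j | S j) peak (Rp j) = (\sum_(j | S j) x j)%:E)%E.
  by rewrite -sumEFin; apply: eq_bigr => j /x_simple.
have card_c : #|[set j | ~~ S j]|%:R * c = \sum_(j | ~~ S j) c.
  rewrite mulr_natl sumr_const; congr (_ *+ _).
  by apply: eq_card => j; apply/idP/idP => [/set_mem|/mem_set].
rewrite /Eterm -/S -/c sum_peaks card_c -EFinD -[X in (X - _)%:E]sum_x (bigID S) /=.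
rewrite opprD addrACA subrr add0r -sumrB; congr (_%:E); apply/esym/sum_norm_same_sign.
by case: x_side => side; [left|right] => j /side; rewrite ?subr_ge0 ?subr_le0.
Qed.

Hypothesis phi_rule : is_rule phi.

Section SimpleRule.
Hypothesis phi_simple : simple_rule phi.

Lemma simple_rule_simple_agent Rp Om i : economy Rp Om -> simple_agent Rp Om i ->
  (phi Rp Om i)%:E = peak (Rp i).
Proof.
by move=> eco; have [_ /(_ Rp Om eco) [nu [_ [_ [phi_s _]]]]] := phi_simple; apply: phi_s.
Qed.

Lemma simple_rule_nonsimple Rp Om i : economy Rp Om -> ~~ simple_agent Rp Om i ->
  ((0 <= excess Rp Om)%E ->
     Om / n%:R <= phi Rp Om i /\ ((phi Rp Om i)%:E <= peak (Rp i))%E) /\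
  ((excess Rp Om <= 0)%E ->
     phi Rp Om i <= Om / n%:R /\ (peak (Rp i) <= (phi Rp Om i)%:E)%E).
Proof.
move=> eco ns; have [_ /(_ Rp Om eco) [nu [nu_bound [_ [_ phi_ns]]]]] := phi_simple.
have [nu_ge0 nu_le] := nu_bound i ns; have [phi_up phi_down] := phi_ns i ns.
move/asboolPn: ns => ns; split=> z_sgn.
- rewrite phi_up // lerDl; split=> //; apply: lee_addr_dist => //.
  by rewrite leNgt; apply/negP => pc; apply: ns; left.
- rewrite phi_down // gerBl; split=> //; apply: lee_subr_dist => //.
  by rewrite leNgt; apply/negP => cp; apply: ns; right.
Qed.

Lemma simple_rule_le_peak Rp Om i : economy Rp Om -> (0 <= excess Rp Om)%E ->
  ((phi Rp Om i)%:E <= peak (Rp i))%E.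
Proof.
move=> eco z_ge0; have [/(simple_rule_simple_agent eco) -> //|ns] := boolP (simple_agent Rp Om i).
by have [/(_ z_ge0) []] := simple_rule_nonsimple eco ns.
Qed.

Lemma simple_rule_ge_peak Rp Om i : economy Rp Om -> (excess Rp Om <= 0)%E ->
  (peak (Rp i) <= (phi Rp Om i)%:E)%E.
Proof.
move=> eco z_le0; have [/(simple_rule_simple_agent eco) -> //|ns] := boolP (simple_agent Rp Om i).
by have [_ /(_ z_le0) []] := simple_rule_nonsimple eco ns.
Qed.

Lemma simple_rule_between Rp Om i : economy Rp Om ->
  (peak (Rp i) <= (phi Rp Om i)%:E)%E /\ phi Rp Om i <= Om / n%:R \/
  Om / n%:R <= phi Rp Om i /\ ((phi Rp Om i)%:E <= peak (Rp i))%E.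
Proof.
move=> eco; have [/(simple_rule_simple_agent eco) <-|ns] := boolP (simple_agent Rp Om i).
  by case: (leP (phi Rp Om i) (Om / n%:R)) => h; [left|right; split=> //; apply: ltW].
have [phi_up phi_down] := simple_rule_nonsimple eco ns.
by case: (leP 0%E (excess Rp Om)) => [/phi_up|/ltW/phi_down] []; [right|left].
Qed.

Lemma simple_rule_share Rp Om i : economy Rp Om -> peak (Rp i) = (Om / n%:R)%:E ->
  phi Rp Om i = Om / n%:R.
Proof.
move=> eco pi_share; apply/eqP; rewrite eq_le.
by case: (simple_rule_between i eco); rewrite pi_share lee_fin => -[-> ->].
Qed.

Lemma simple_rule_share_others Rp Om i : (0 < n)%N -> economy Rp Om ->
  (forall j, j != i -> peak (Rp j) = (Om / n%:R)%:E) -> phi Rp Om i = Om / n%:R.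
Proof.
move=> n_gt0 eco others_share.
have share_sum : \sum_(j < n) Om / n%:R = Om.
  by rewrite sumr_const card_ord -[_ *+ n]mulr_natl mulrC divfK // pnatr_eq0 -lt0n.
have [_] := phi_rule eco; rewrite -[X in _ = X -> _]share_sum.
rewrite (bigD1 i) //= [in RHS](bigD1 i) //= (eq_bigr (fun=> Om / n%:R)) => [/addIr //|j ji].
exact: (simple_rule_share eco (others_share j ji)).
Qed.

Lemma simple_rule_efficient : efficient phi.
Proof.
move=> Rp Om eco [x [x_ge0 [sum_x [x_pref [j [_ x_better]]]]]].
have [phi_ge0 sum_phi] := phi_rule eco.
suff x_phi : x =1 phi Rp Om.
  by apply: x_better; rewrite -x_phi; apply: single_peaked_refl (eco.1 j) _.
have sum_eq : \sum_k x k = \sum_k phi Rp Om k by rewrite sum_x sum_phi.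
case: (leP 0%E (excess Rp Om)) => [z_ge0|/ltW z_le0].
- move=> k; apply/esym; move: k; apply: ler_sum_eq (esym sum_eq) => k.
  rewrite leNgt; apply/negP => x_lt.
  have [_ /(_ (x_pref k))//] := single_peaked_lt_peak (eco.1 k) (x_ge0 k) x_lt
    (simple_rule_le_peak k eco z_ge0).
- apply: ler_sum_eq sum_eq => k.
  rewrite leNgt; apply/negP => x_gt.
  have [_ /(_ (x_pref k))//] := single_peaked_gt_peak (eco.1 k) (phi_ge0 k)
    (simple_rule_ge_peak k eco z_le0) x_gt.
Qed.

Lemma simple_rule_equal_division : equal_division_guarantee phi.
Proof.
move=> Rp Om i eco pi_share; rewrite (simple_rule_share eco pi_share).
by split; apply: single_peaked_refl (eco.1 i) (share_ge0 eco.2).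
Qed.

Lemma simple_rule_NOM : (0 < n)%N -> NOM phi.
Proof.
move=> n_gt0 i Ri Ri' Om Ri_sp Ri'_sp Om_gt0 [_ obvious].
have [share_sp share_peak] : single_peaked (kinked_pref (Om / n%:R) 1 1) /\
    peak (kinked_pref (Om / n%:R) 1 1) = (Om / n%:R)%:E.
  by split; [apply: kinked_single_peaked|apply: kinked_peak]; rewrite ?share_ge0.
have share_option : option_set phi i Ri' Om (Om / n%:R).
  exists (fun=> kinked_pref (Om / n%:R) 1 1); split => //.
  apply/esym/simple_rule_share_others => // [|j ji]; first exact: economy_upd.
  by rewrite /upd (negbTE ji).
have [_ [Rq [Rq_sp ->]] [_ worse]] := obvious _ share_option.
have eco := economy_upd Rq_sp Ri_sp Om_gt0.
apply: worse; apply: (single_peaked_between Ri_sp); first by have [] := phi_rule eco.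
  exact: share_ge0.
by have := simple_rule_between i eco; rewrite upd_at.
Qed.

End SimpleRule.

Section Properties.
Hypotheses (phi_opo : own_peak_only phi) (phi_eff : efficient phi).
Hypotheses (phi_edg : equal_division_guarantee phi) (phi_nom : NOM phi).

Lemma equal_division_share Rp Om i : economy Rp Om -> peak (Rp i) = (Om / n%:R)%:E ->
  phi Rp Om i = Om / n%:R.
Proof.
move=> eco pi_share; have [phi_c c_phi] := phi_edg eco pi_share.
have phi_ge0 := (phi_rule eco).1 i; have c_ge0 := share_ge0 eco.2.
have [c_le_peak peak_le_c] : (((Om / n%:R)%:E <= peak (Rp i)) /\ (peak (Rp i) <= (Om / n%:R)%:E))%E.
  by rewrite pi_share.
case: (ltgtP (phi Rp Om i) (Om / n%:R)) => // [lt|gt]; exfalso.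
- by have [_] := single_peaked_lt_peak (eco.1 i) phi_ge0 lt c_le_peak.
- by have [_] := single_peaked_gt_peak (eco.1 i) c_ge0 peak_le_c gt.
Qed.

Lemma NOM_share_not_preferred Rp Om i Rs : economy Rp Om ->
  single_peaked Rs -> peak Rs = peak (Rp i) ->
  ~ strict Rs (Om / n%:R)%:E (phi Rp Om i)%:E.
Proof.
move=> eco Rs_sp Rs_peak better; set Rc := kinked_pref (Om / n%:R) 1 1.
have Rc_sp : single_peaked Rc by apply: kinked_single_peaked; rewrite ?share_ge0 ?eco.2.
have Rc_share Rq : (forall j, j != i -> single_peaked (Rq j)) ->
    phi (upd Rq i Rc) Om i = Om / n%:R.
  move=> Rq_sp; apply: equal_division_share; first exact: economy_upd Rq_sp Rc_sp eco.2.
  by rewrite upd_at kinked_peak ?share_ge0 ?eco.2.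
have Rs_opo : phi (upd Rp i Rs) Om i = phi Rp Om i by rewrite -(phi_opo eco Rs_sp Rs_peak).
have others_sp j : j != i -> single_peaked (Rp j) by move=> _; apply: eco.1.
apply: (@phi_nom i _ _ _ Rs_sp Rc_sp eco.2); split.
  by exists Rp; split=> //; rewrite Rc_share // Rs_opo.
move=> _ [Rq [Rq_sp ->]]; rewrite Rc_share //.
by exists (phi Rp Om i) => //; exists Rp; rewrite Rs_opo.
Qed.

Lemma no_shortfall_below_share Rp Om i : economy Rp Om ->
  ~ (((phi Rp Om i)%:E < peak (Rp i))%E /\ phi Rp Om i < Om / n%:R).
Proof.
move=> eco [short below]; have phi_ge0 := (phi_rule eco).1 i.
have [Rs [Rs_sp Rs_peak]] := same_peak_prefers_up (eco.1 i) phi_ge0 short below.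
exact: NOM_share_not_preferred.
Qed.

Lemma no_excess_above_share Rp Om i : economy Rp Om ->
  ~ ((peak (Rp i) < (phi Rp Om i)%:E)%E /\ Om / n%:R < phi Rp Om i).
Proof.
move=> eco [excess above].
have [Rs [Rs_sp Rs_peak]] := same_peak_prefers_down (eco.1 i) (share_ge0 eco.2) excess above.
exact: NOM_share_not_preferred.
Qed.

Lemma efficient_no_transfer Rp Om i j (d : R) : economy Rp Om -> i != j ->
  0 <= phi Rp Om i + d -> 0 <= phi Rp Om j - d ->
  strict (Rp i) (phi Rp Om i + d)%:E (phi Rp Om i)%:E ->
  strict (Rp j) (phi Rp Om j - d)%:E (phi Rp Om j)%:E -> False.
Proof.
move=> eco ij xi_ge0 xj_ge0 better_i better_j; have [phi_ge0 sum_phi] := phi_rule eco.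
pose x k := phi Rp Om k + (if k == i then d else 0) - (if k == j then d else 0).
have xi : x i = phi Rp Om i + d by rewrite /x eqxx (negbTE ij) subr0.
have xj : x j = phi Rp Om j - d by rewrite /x eqxx eq_sym (negbTE ij) addr0.
have xk k : k != i -> k != j -> x k = phi Rp Om k.
  by move=> /negbTE ki /negbTE kj; rewrite /x ki kj addr0 subr0.
apply: (phi_eff eco); exists x; split; [|split; [|split]].
- move=> k; have [->|ki] := eqVneq k i; first by rewrite xi.
  by have [->|kj] := eqVneq k j; [rewrite xj|rewrite xk].
- by rewrite /x sumrB big_split /= sum_phi -!big_mkcond /= !big_pred1_eq addrK.
- move=> k; have [->|ki] := eqVneq k i; first by rewrite xi; case: better_i.
  have [->|kj] := eqVneq k j; first by rewrite xj; case: better_j.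
  by rewrite xk //; apply: single_peaked_refl (eco.1 k) (phi_ge0 k).
- by exists i; rewrite xi.
Qed.

Lemma efficient_no_crossing Rp Om i j : economy Rp Om ->
  (peak (Rp i) < (phi Rp Om i)%:E)%E -> ((phi Rp Om j)%:E < peak (Rp j))%E -> False.
Proof.
move=> eco over under; have [phi_ge0 _] := phi_rule eco.
have ji : j != i by apply: contraTneq under => ->; rewrite -leNgt ltW.
have [e e_gt0 e_le] := lt_EFin_gap under.
have := peak_ge0 (eco.1 i); move: over.
case Epi: (peak (Rp i)) => [r| |] //; rewrite lte_fin lee_fin => r_lt r_ge0.
pose d := Num.min e (phi Rp Om i - r).
have d_gt0 : 0 < d by rewrite lt_min e_gt0 subr_gt0.
have [d_le_e d_le_r] : d <= e /\ d <= phi Rp Om i - r by split; rewrite ge_min lexx ?orbT.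
apply: (@efficient_no_transfer _ _ j i d eco ji).
- by rewrite addr_ge0 // ltW.
- lra.
- apply: single_peaked_lt_peak (eco.1 j) (phi_ge0 j) _ _; first by rewrite ltrDl.
  by apply: le_trans e_le; rewrite lee_fin lerD2l.
- apply: single_peaked_gt_peak (eco.1 i) _ _ _; rewrite ?Epi ?lee_fin; lra.
Qed.

Lemma efficient_le_peak Rp Om i : economy Rp Om -> (0 <= excess Rp Om)%E ->
  ((phi Rp Om i)%:E <= peak (Rp i))%E.
Proof.
move=> eco z_ge0; rewrite leNgt; apply/negP => over; have [_ sum_phi] := phi_rule eco.
have peak_le j : (peak (Rp j) <= (phi Rp Om j)%:E)%E.
  by rewrite leNgt; apply/negP; apply: efficient_no_crossing eco over.
have fin j : peak (Rp j) = (fine (peak (Rp j)))%:E.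
  exact: bounded_fineK (peak_ge0 (eco.1 j)) (peak_le j).
move: z_ge0; rewrite /excess (eq_bigr _ (fun j _ => fin j)) sumEFin -EFinB lee_fin subr_ge0.
apply/negP; rewrite -ltNge -sum_phi; apply: (ltr_sum_le_lt (i := i)) => [j|].
  by rewrite -lee_fin -fin.
by rewrite -lte_fin -fin.
Qed.

Lemma efficient_ge_peak Rp Om i : economy Rp Om -> (excess Rp Om <= 0)%E ->
  (peak (Rp i) <= (phi Rp Om i)%:E)%E.
Proof.
move=> eco z_le0; rewrite leNgt; apply/negP => under; have [_ sum_phi] := phi_rule eco.
have le_peak j : ((phi Rp Om j)%:E <= peak (Rp j))%E.
  by rewrite leNgt; apply/negP => over; apply: efficient_no_crossing eco over under.
move: z_le0; rewrite /excess sube_le0 => sum_peaks_le.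
have fin j : peak (Rp j) = (fine (peak (Rp j)))%:E.
  apply: bounded_fineK (peak_ge0 (eco.1 j)) (le_trans _ sum_peaks_le).
  rewrite (bigD1 j) //= leeDl // sume_ge0 // => k _; exact: peak_ge0 (eco.1 k).
move: sum_peaks_le; rewrite (eq_bigr _ (fun j _ => fin j)) sumEFin lee_fin.
apply/negP; rewrite -ltNge -sum_phi; apply: (ltr_sum_le_lt (i := i)) => [j|].
  by rewrite -lee_fin -fin.
by rewrite -lte_fin -fin.
Qed.

Lemma simple_agent_gets_peak Rp Om i : economy Rp Om -> simple_agent Rp Om i ->
  (phi Rp Om i)%:E = peak (Rp i).
Proof.
move=> eco /asboolP[[z_ge0 peak_lt]|[z_le0 lt_peak]]; apply/eqP; rewrite eq_le.
- rewrite efficient_le_peak //= leNgt; apply/negP => short.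
  by apply: (no_shortfall_below_share (i := i) eco); split; rewrite // -lte_fin (lt_trans short).
- rewrite efficient_ge_peak //= andbT leNgt; apply/negP => excess.
  by apply: (no_excess_above_share (i := i) eco); split; rewrite // -lte_fin (lt_trans _ excess).
Qed.

Lemma nonsimple_agent_share_side Rp Om i : economy Rp Om -> ~~ simple_agent Rp Om i ->
  ((0 <= excess Rp Om)%E -> Om / n%:R <= phi Rp Om i) /\
  ((excess Rp Om <= 0)%E -> phi Rp Om i <= Om / n%:R).
Proof.
move=> eco /asboolPn ns; split=> z_sgn; rewrite leNgt; apply/negP => phi_c.
- apply: (no_shortfall_below_share (i := i) eco); split=> //.
  apply: (lt_le_trans (y := (Om / n%:R)%:E)).
    by rewrite lte_fin.
  by rewrite leNgt; apply/negP => peak_lt; apply: ns; left.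
- apply: (no_excess_above_share (i := i) eco); split=> //.
  apply: (le_lt_trans (y := (Om / n%:R)%:E)).
    by rewrite leNgt; apply/negP => lt_peak; apply: ns; right.
  by rewrite lte_fin.
Qed.

Lemma share_deviation_le_peak_deviation Rp Om i : economy Rp Om ->
  ((`|phi Rp Om i - Om / n%:R|)%:E <= `|peak (Rp i) - (Om / n%:R)%:E|)%E.
Proof.
move=> eco; have := no_shortfall_below_share (i := i) eco.
have := no_excess_above_share (i := i) eco.
case: (peak (Rp i)) => [r| |] //= not_above not_below; rewrite ?leey // lee_fin.
by apply: dist_le_between => -[? ?]; [apply: not_below|apply: not_above]; rewrite lte_fin.
Qed.

Lemma properties_simple_rule : simple_rule phi.
Proof.
split=> // Rp Om eco; have [_ sum_phi] := phi_rule eco.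
exists (fun j => `|phi Rp Om j - Om / n%:R|); split; [|split; [|split]].
- by move=> i _; split; [exact: normr_ge0|exact: share_deviation_le_peak_deviation].
- rewrite sumEFin; apply/esym/Eterm_total_deviation => // [j|]; first exact: simple_agent_gets_peak.
  case: (leP 0%E (excess Rp Om)) => [z_ge0|/ltW z_le0]; [left|right] => j.
    by move/(nonsimple_agent_share_side eco) => -[/(_ z_ge0)].
  by move/(nonsimple_agent_share_side eco) => -[_ /(_ z_le0)].
- by move=> i; apply: simple_agent_gets_peak.
- move=> i /(nonsimple_agent_share_side eco) [up down]; split=> z_sgn.
    by rewrite ger0_norm ?subr_ge0 ?up // addrC subrK.
  by rewrite ler0_norm ?subr_le0 ?down // opprB subKr.
Qed.

End Properties.

End Rules.

Unset Implicit Arguments.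
Local Close Scope classical_set_scope.

Theorem theorem2 (R : realType) (n : nat) (phi : ruleT R n) :
  (0 < n)%N -> is_rule phi ->
  ((own_peak_only phi /\ efficient phi /\ equal_division_guarantee phi /\ NOM phi)
   <-> simple_rule phi).
Proof.
move=> n_gt0 phi_rule; split=> [[opo [eff [edg nom]]]|phi_simple].
  exact: properties_simple_rule.
split; first exact: phi_simple.1.
split; first exact: simple_rule_efficient.
split; first exact: simple_rule_equal_division.
exact: simple_rule_NOM.
Qed.
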